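(* Let $n\ge 3$ be odd. For any three distinct indices $i,j,k\in[n]$, in $R/J_n$ we have $x_{ij}\,p^+_{n,k}=x_{jk}\,p^+_{n,i}$.
   Context: Let $\mathbbm{k}$ be a field, $[n]=\{1,\dots,n\}$, $R=\mathbbm{k}[x_{ij}:1\le i\le j\le n]$ with $x_{ij}=x_{ji}$; exponent vectors in $\mathbb{N}^{\binom{n+1}{2}}$ with basis $e_{ij}=e_{ji}$. $V_n$ is the $n\times\binom{n+1}{2}$ matrix whose column indexed by $jk$ is $e_j+e_k\in\mathbb{Z}^n$; for $\mathbf b\in\mathbb{N}^n$, $V_n^{-1}[\mathbf b]=\{u\in\mathbb{N}^{\binom{n+1}{2}}:V_nu=\mathbf b\}$. $J_n$ is generated by the principal $2$-minors $x_{ii}x_{jj}-x_{ij}^2$. With $[ij|kl]:=e_{ik}+e_{jl}-e_{il}-e_{jk}$, $L'_n$ is the lattice generated by the $[ij|ij]$; two points of a fiber are equivalent if their difference lies in $L'_n$. For $n$ odd and $i\in[n]$, $p^+_{n,i}\in R/J_n$ is the sum of $x^{\mathbf a}$ over the equivalence classes $\mathbf a$ of $V_n^{-1}[(n-2,\dots,n-2)+e_i]$ modulo $L'_n$. *)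

From HB Require Import structures.
From mathcomp Require Import all_boot all_order all_algebra.
From mathcomp Require Import mpoly.
From Stdlib Require Import ClassicalEpsilon.
Set Implicit Arguments. Unset Strict Implicit. Unset Printing Implicit Defensive.
Import Order.TTheory GRing.Theory Num.Theory.
Local Open Scope ring_scope.

(* Indices [n] = {1..n} are represented 0-based by 'I_n. *)

(* Index set of the variables x_{ij}, i <= j (so that x_{ij} = x_{ji}). *)
Definition Pair (n : nat) := {p : 'I_n * 'I_n | (p.1 <= p.2)%N}.

Definition sym_pair (n : nat) (i j : 'I_n) : Pair n :=
  match leqP i j with
  | LeqNotGtn h => exist _ (i, j) h
  | GtnNotLeq h => exist (fun p : 'I_n * 'I_n => (p.1 <= p.2)%N) (j, i) (ltnW h)
  end.

Definition nvar (n : nat) := #|{: Pair n}|.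

Definition vidx (n : nat) (p : Pair n) : 'I_(nvar n) := enum_rank p.

Definition Rpoly (k : fieldType) (n : nat) := {mpoly k[nvar n]}.

Definition xv (k : fieldType) (n : nat) (i j : 'I_n) : Rpoly k n :=
  'X_(vidx (sym_pair i j)).

Definition expo (n : nat) (m : 'X_{1..nvar n}) (p : Pair n) : nat := m (vidx p).

(* (V_n u)_v : column jk of V_n is e_j + e_k *)
Definition Vn (n : nat) (m : 'X_{1..nvar n}) (v : 'I_n) : nat :=
  (\sum_(p : Pair n) expo m p * ((val p).1 == v) + (\sum_(p : Pair n) expo m p * ((val p).2 == v)))%N.

Definition ebasis (n : nat) (a b : 'I_n) (p : Pair n) : int :=
  ((sym_pair a b == p) : nat)%:Z.

Definition brk (n : nat) (i j k l : 'I_n) (p : Pair n) : int :=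
  ebasis i k p + ebasis j l p - ebasis i l p - ebasis j k p.

Definition inLn' (n : nat) (d : Pair n -> int) : Prop :=
  exists c : 'I_n -> 'I_n -> int,
    forall p, d p = \sum_(i < n) \sum_(j < n) c i j * brk i j i j p.

Definition pbool (P : Prop) : bool :=
  if excluded_middle_informative P then true else false.

Definition Lequiv (n : nat) (a b : 'X_{1..nvar n}) : bool :=
  pbool (inLn' (fun p => (expo a p)%:Z - (expo b p)%:Z)).

(* degree bound large enough to contain the whole fiber V_n^{-1}[b]
   (a fiber element has total degree (sum_v b_v)/2 <= sum_v b_v) *)
Definition fbound (n : nat) (b : 'I_n -> nat) : nat := (\sum_(v < n) b v).+1.

Definition fiber (n : nat) (b : 'I_n -> nat) : {set (bmultinom (nvar n) (fbound b))} :=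
  [set m : (bmultinom (nvar n) (fbound b)) | [forall v, Vn (bmnm m) v == b v]].

Definition fclasses (n : nat) (b : 'I_n -> nat) :=
  equivalence_partition (fun a b0 : (bmultinom (nvar n) (fbound b)) => Lequiv (bmnm a) (bmnm b0))
                        (fiber b).

(* x^a for an equivalence class a (computed on a chosen representative;
   in R/J_n the value does not depend on the representative) *)
Definition class_mono (k : fieldType) (n : nat) (b : 'I_n -> nat)
    (C : {set (bmultinom (nvar n) (fbound b))}) : Rpoly k n :=
  match [pick a in C] with Some a => 'X_[bmnm a] | None => 0 end.

Definition bplus (n : nat) (i : 'I_n) : 'I_n -> nat :=
  fun v => ((n - 2) + (v == i))%N.

(* p^+_{n,i} (a representative in R of the element of R/J_n) *)
Definition pplus (k : fieldType) (n : nat) (i : 'I_n) : Rpoly k n :=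
  \sum_(C in fclasses (bplus i)) class_mono k C.

Definition inJn (k : fieldType) (n : nat) (f : Rpoly k n) : Prop :=
  exists c : 'I_n -> 'I_n -> Rpoly k n,
    f = \sum_(i < n) \sum_(j < n) c i j * (xv k i i * xv k j j - xv k i j ^+ 2).

From HB Require Import structures.
From mathcomp Require Import all_boot all_order all_algebra.
From mathcomp Require Import mpoly.
From mathcomp Require Import zify.
From Stdlib Require Import ClassicalEpsilon.
Set Implicit Arguments. Unset Strict Implicit. Unset Printing Implicit Defensive.
Import GRing.Theory.
Local Open Scope ring_scope.

(* Modulo J_n a factor x_ab^2 (a <> b) may be traded for x_aa x_bb. This move
   keeps the degree vector V_n and the class modulo L'_n and lowers the
   off-diagonal degree by 2, so every monomial is J_n-congruent and
   L'_n-equivalent to a normal one, all of whose off-diagonal exponents are 0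
   or 1. Two normal monomials with the same V_n and the same L'_n-class
   coincide, because off the diagonal L'_n only sees parities. Hence p^+_{n,l}
   is J_n-congruent to the sum of the normal monomials of degree vector
   (n-2,...,n-2) + e_l, and x_ij p^+_{n,l} to the sum of the normal forms of
   their products with x_ij. These normal forms are exactly the normal
   monomials of degree vector (n-2,...,n-2) + e_i + e_j + e_l, each hit once:
   a preimage of such a z with z_ij = 0 exists because then z_ii, z_jj > 0.
   That last set is symmetric in i, j, l. *)

Lemma sum_mul_eq (I : finType) (q : I) (F : I -> nat) :
  (\sum_i F i * (q == i) = F q)%N.
Proof.
rewrite (bigD1 q) //= eqxx muln1 big1 ?addn0 // => i iq.
by rewrite eq_sym (negbTE iq) muln0.
Qed.

Lemma sum_pred1 (I : finType) (q : I) : (\sum_i ((i == q) : nat) = 1)%N.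
Proof.
by rewrite -(sum_mul_eq q (fun=> 1%N)); apply: eq_bigr => i _; rewrite eq_sym mul1n.
Qed.

Lemma odd_subz_double (x y : nat) (z : int) : x%:Z - y%:Z = 2 * z -> odd x = odd y.
Proof.
rewrite -[x]odd_double_half -[y]odd_double_half.
by case: (odd x); case: (odd y) => //= h; lia.
Qed.

Section DoubleSums.
Variables (R : pzRingType) (n : nat) (F : 'I_n -> 'I_n -> R).

Lemma sum2_delta a b :
  \sum_i \sum_j (if (i == a) && (j == b) then 1 else 0) * F i j = F a b.
Proof.
rewrite (bigD1 a) //= [X in _ + X]big1 ?addr0; last first.
  by move=> i /negbTE ia; rewrite big1 // => j _; rewrite ia mul0r.
rewrite (bigD1 b) //= [X in _ + X]big1 ?addr0 ?eqxx ?mul1r //.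
by move=> j /negbTE jb; rewrite jb andbF mul0r.
Qed.

Lemma sum2D c1 c2 :
  \sum_i \sum_j (c1 i j + c2 i j) * F i j =
  \sum_i \sum_j c1 i j * F i j + \sum_i \sum_j c2 i j * F i j.
Proof.
rewrite -big_split; apply: eq_bigr => i _.
by rewrite -big_split; apply: eq_bigr => j _; rewrite mulrDl.
Qed.

Lemma sum2Ml h c :
  h * \sum_i \sum_j c i j * F i j = \sum_i \sum_j (h * c i j) * F i j.
Proof.
rewrite mulr_sumr; apply: eq_bigr => i _.
by rewrite mulr_sumr; apply: eq_bigr => j _; rewrite mulrA.
Qed.

End DoubleSums.

Section Monomials.
Variable n : nat.
Implicit Types (a b c u v : 'I_n) (d : 'I_n -> nat) (p q : Pair n) (m : 'X_{1..nvar n}).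

Definition offdiag p : bool := (val p).1 != (val p).2.

Lemma sym_pairE a b : val (sym_pair a b) = if (a <= b)%N then (a, b) else (b, a).
Proof. by rewrite /sym_pair; case: leqP. Qed.

Lemma sym_pair_val p : sym_pair (val p).1 (val p).2 = p.
Proof. by case: p => [[a b] ab]; apply: val_inj; rewrite sym_pairE /= ab. Qed.

Lemma sym_pair_eq a b c u :
  (sym_pair a b == sym_pair c u) = (a == c) && (b == u) || (a == u) && (b == c).
Proof.
rewrite -(inj_eq val_inj) !sym_pairE.
case: (leqP a b) => ab; case: (leqP c u) => cu; rewrite xpair_eqE -!(inj_eq val_inj) /=;
case: (eqVneq (a : nat) c) => ac; case: (eqVneq (b : nat) u) => bu;
case: (eqVneq (a : nat) u) => au; case: (eqVneq (b : nat) c) => bc //=; lia.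
Qed.

Lemma sym_pairC a b : sym_pair a b = sym_pair b a.
Proof. by apply/eqP; rewrite sym_pair_eq !eqxx orbT. Qed.

Lemma offdiag_sym_pair a b : offdiag (sym_pair a b) = (a != b).
Proof. by rewrite /offdiag sym_pairE; case: leqP; rewrite // eq_sym. Qed.

Lemma diag_pair p : ~~ offdiag p -> p = sym_pair (val p).1 (val p).1.
Proof. by rewrite negbK => /eqP e; rewrite -{1}(sym_pair_val p) e. Qed.

Lemma sym_pair_diag_eq a q : offdiag q -> (sym_pair a a == q) = false.
Proof. by apply: contraTF => /eqP <-; rewrite offdiag_sym_pair eqxx. Qed.

Definition Upair p : 'X_{1..nvar n} := U_(vidx p)%MM.

Local Open Scope nat_scope.

Lemma expoD m1 m2 p : expo (m1 + m2)%MM p = expo m1 p + expo m2 p.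
Proof. exact: mnmDE. Qed.

Lemma expoB m1 m2 p : expo (m1 - m2)%MM p = expo m1 p - expo m2 p.
Proof. exact: mnmBE. Qed.

Lemma expoU q p : expo (Upair q) p = (q == p).
Proof. by rewrite /expo /Upair mnm1E (inj_eq enum_rank_inj). Qed.

Lemma expo_inj m1 m2 : (forall p, expo m1 p = expo m2 p) -> m1 = m2.
Proof. by move=> e; apply/mnmP => x; rewrite -(enum_valK x); apply: e. Qed.

Lemma Upair_subK m p : 0 < expo m p -> (m - Upair p + Upair p)%MM = m.
Proof.
move=> mp; apply: expo_inj => q; rewrite expoD expoB expoU.
by case: (eqVneq p q) => [<-|] /=; lia.
Qed.

Lemma VnD m1 m2 v : Vn (m1 + m2)%MM v = Vn m1 v + Vn m2 v.
Proof.
rewrite /Vn; under eq_bigr do rewrite expoD mulnDl.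
under [X in _ + X]eq_bigr do rewrite expoD mulnDl.
by rewrite !big_split /= addnACA.
Qed.

Lemma VnU a b v : Vn (Upair (sym_pair a b)) v = (v == a) + (v == b).
Proof.
rewrite /Vn; under eq_bigr do rewrite expoU mulnC.
under [X in _ + X]eq_bigr do rewrite expoU mulnC.
rewrite (sum_mul_eq _ (fun p => ((val p).1 == v) : nat)).
rewrite (sum_mul_eq _ (fun p => ((val p).2 == v) : nat)) sym_pairE.
by case: leqP => _; rewrite /= ?[_ == v]eq_sym // addnC.
Qed.

Lemma Vn_swap m a b :
  Vn (m + Upair (sym_pair a b) + Upair (sym_pair a b))%MM
  =1 Vn (m + Upair (sym_pair a a) + Upair (sym_pair b b))%MM.
Proof. by move=> v; rewrite !VnD !VnU; lia. Qed.

Lemma sym_pair_count v p :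
  \sum_u (sym_pair v u == p) + (sym_pair v v == p) = ((val p).1 == v) + ((val p).2 == v).
Proof.
case: p => [[a b] hab] /=.
have -> : exist _ (a, b) hab = sym_pair a b by apply: val_inj; rewrite sym_pairE /= hab.
under eq_bigr do rewrite sym_pair_eq.
rewrite sym_pair_eq !(eq_sym v).
case: (eqVneq a b) => [<-|ab].
  under eq_bigr do rewrite orbb; rewrite orbb andbb.
  by case: (eqVneq a v) => [->|av] /=; rewrite ?sum_pred1 // big1.
case: (eqVneq a v) => [<-|av] /=.
  rewrite [b == a]eq_sym (negbTE ab) /=.
  by under eq_bigr do rewrite orbF; rewrite sum_pred1.
by rewrite andbF; case: (b == v); rewrite ?sum_pred1 // big1.
Qed.

Lemma Vn_row m v :
  Vn m v = 2 * expo m (sym_pair v v) + \sum_(u < n | u != v) expo m (sym_pair v u).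
Proof.
have expo_sum q : expo m q = \sum_p expo m p * (q == p) by rewrite sum_mul_eq.
have -> : Vn m v = \sum_u expo m (sym_pair v u) + expo m (sym_pair v v).
  under [in RHS]eq_bigr do rewrite expo_sum.
  rewrite exchange_big /= (expo_sum (sym_pair v v)) -big_split /=.
  rewrite /Vn -big_split /=; apply: eq_bigr => p _.
  by rewrite -big_distrr /= -!mulnDr sym_pair_count.
by rewrite (bigD1 v) //= addnC addnA addnn -mul2n.
Qed.

Lemma sum_Vn m : \sum_v Vn m v = 2 * mdeg m.
Proof.
rewrite /Vn big_split /= [X in X + _]exchange_big [X in _ + X]exchange_big /=.
have row_sum (f : Pair n -> 'I_n) : \sum_p \sum_v expo m p * (f p == v) = \sum_p expo m p.
  apply: eq_bigr => p _; rewrite -big_distrr /=.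
  by under eq_bigr do rewrite eq_sym; rewrite sum_pred1 muln1.
rewrite !row_sum addnn -mul2n mdegE /expo /vidx.
congr (2 * _); rewrite [RHS](reindex (@enum_rank (Pair n))) //.
by exists enum_val => x _; [exact: enum_rankK | exact: enum_valK].
Qed.

Definition in_fiber d m : bool := [forall v, Vn m v == d v].

Lemma in_fiberP d m : reflect (Vn m =1 d) (in_fiber d m).
Proof. by apply: (iffP forallP) => e v; apply/eqP. Qed.

Definition offdeg m := \sum_p offdiag p * expo m p.

Lemma offdeg_swap m a b : a != b ->
  offdeg (m + Upair (sym_pair a b) + Upair (sym_pair a b))%MM =
  offdeg (m + Upair (sym_pair a a) + Upair (sym_pair b b))%MM + 2.
Proof.
move=> ab; rewrite /offdeg; under eq_bigr do rewrite !expoD !expoU !mulnDr.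
under [X in _ = X + _]eq_bigr do rewrite !expoD !expoU !mulnDr.
rewrite !big_split /= !(sum_mul_eq _ (fun p => offdiag p : nat)).
by rewrite !offdiag_sym_pair !eqxx ab; lia.
Qed.

Definition normal m : bool := [forall (p | offdiag p), expo m p <= 1].

Lemma normal_expo_odd m p : normal m -> offdiag p -> expo m p = odd (expo m p).
Proof. by move=> /forall_inP mN /mN; case: (expo m p) => [|[]]. Qed.

Definition normal_fiber d : pred 'X_{1..nvar n} := [pred y | normal y && in_fiber d y].

Lemma normalDl m1 m2 : normal (m1 + m2)%MM -> normal m1.
Proof.
move=> /forall_inP mN; apply/forall_inP => q qo.
by apply: leq_trans (mN q qo); rewrite expoD leq_addr.
Qed.

(* V_n counts the diagonal exponent twice, and row a has at most n - 2
   off-diagonal entries equal to 1. *)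
Lemma normal_diag_pos m a c : normal m -> a != c -> expo m (sym_pair a c) = 0 ->
  n - 2 < Vn m a -> 0 < expo m (sym_pair a a).
Proof.
move=> /forall_inP mN ac m_ac; rewrite Vn_row (bigD1 c) 1?eq_sym //= m_ac add0n.
set row := \sum_(u < n | (u != a) && (u != c)) _.
have : row <= \sum_(u < n | (u != a) && (u != c)) 1.
  apply: leq_sum => u /andP [ua _]; apply: mN.
  by rewrite offdiag_sym_pair eq_sym.
have : \sum_(u < n) 1 = n by rewrite sum1_card card_ord.
rewrite (bigD1 a) //= (bigD1 c) 1?eq_sym //=.
set others := \sum_(u < n | _) 1; lia.
Qed.

End Monomials.

Section Ideal.
Variables (k : fieldType) (n : nat).
Implicit Types (a b : 'I_n) (m : 'X_{1..nvar n}) (f g h : Rpoly k n).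

Definition eqJ f g := inJn (f - g).

Lemma inJn0 : @inJn k n 0.
Proof.
by exists (fun _ _ => 0); rewrite big1 // => i _; rewrite big1 // => j _; rewrite mul0r.
Qed.

Lemma inJnD f g : inJn f -> inJn g -> inJn (f + g).
Proof. by move=> [c1 ->] [c2 ->]; exists (fun i j => c1 i j + c2 i j); rewrite sum2D. Qed.

Lemma inJnMl h f : inJn f -> inJn (h * f).
Proof. by move=> [c ->]; exists (fun i j => h * c i j); rewrite sum2Ml. Qed.

Lemma inJn_binomial a b : inJn (xv k a a * xv k b b - xv k a b ^+ 2).
Proof. by exists (fun i j => if (i == a) && (j == b) then 1 else 0); rewrite sum2_delta. Qed.

Lemma eqJ_sym f g : eqJ f g -> eqJ g f.
Proof. by move=> /(inJnMl (-1)); rewrite /eqJ mulN1r opprB. Qed.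

Lemma eqJ_trans g f h : eqJ f g -> eqJ g h -> eqJ f h.
Proof.
by move=> fg gh; have := inJnD fg gh; rewrite /eqJ addrA subrK.
Qed.

Lemma eqJ_mull h f g : eqJ f g -> eqJ (h * f) (h * g).
Proof. by rewrite /eqJ -mulrBr; apply: inJnMl. Qed.

Lemma eqJ_sum (I : Type) (r : seq I) (P : pred I) (F G : I -> Rpoly k n) :
  (forall i, P i -> eqJ (F i) (G i)) ->
  eqJ (\sum_(i <- r | P i) F i) (\sum_(i <- r | P i) G i).
Proof.
apply: big_ind2; first by rewrite /eqJ subrr; apply: inJn0.
by move=> f1 g1 f2 g2 fg1 fg2; rewrite /eqJ opprD addrACA; apply: inJnD.
Qed.

Lemma mpolyX_Upair a b : 'X_[Upair (sym_pair a b)] = xv k a b.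
Proof. by []. Qed.

Lemma eqJ_swap m a b :
  eqJ 'X_[m + Upair (sym_pair a b) + Upair (sym_pair a b)]
      'X_[m + Upair (sym_pair a a) + Upair (sym_pair b b)].
Proof.
rewrite /eqJ !mpolyXD !mpolyX_Upair -!mulrA -mulrBr -opprB mulrN -mulNr -expr2.
exact/inJnMl/inJn_binomial.
Qed.

End Ideal.

Section Lattice.
Variable n : nat.
Implicit Types (a b : 'I_n) (p : Pair n) (e : Pair n -> int) (m : 'X_{1..nvar n}).

Lemma inLn'_ext e1 e2 : e1 =1 e2 -> inLn' e1 -> inLn' e2.
Proof. by move=> e12 [c hc]; exists c => p; rewrite -e12. Qed.

Lemma inLn'0 : @inLn' n (fun=> 0).
Proof.
by exists (fun _ _ => 0) => p; rewrite big1 // => i _; rewrite big1 // => j _; rewrite mul0r.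
Qed.

Lemma inLn'D e1 e2 : inLn' e1 -> inLn' e2 -> inLn' (fun p => e1 p + e2 p).
Proof.
by move=> [c1 h1] [c2 h2]; exists (fun i j => c1 i j + c2 i j) => p; rewrite h1 h2 sum2D.
Qed.

Lemma inLn'N e : inLn' e -> inLn' (fun p => - e p).
Proof.
by move=> [c hc]; exists (fun i j => -1 * c i j) => p; rewrite hc -sum2Ml mulN1r.
Qed.

Lemma inLn'_brk a b : inLn' (brk a b a b).
Proof.
by exists (fun i j => if (i == a) && (j == b) then 1 else 0) => p; rewrite sum2_delta.
Qed.

Lemma pboolP (P : Prop) : reflect P (pbool P).
Proof. by rewrite /pbool; case: excluded_middle_informative => h; constructor. Qed.

Lemma LequivP m1 m2 :
  reflect (inLn' (fun p => (expo m1 p)%:Z - (expo m2 p)%:Z)) (Lequiv m1 m2).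
Proof. exact: pboolP. Qed.

Lemma Lequiv_refl m : Lequiv m m.
Proof. by apply/LequivP; apply: inLn'_ext inLn'0 => p; rewrite subrr. Qed.

Lemma Lequiv_sym m1 m2 : Lequiv m1 m2 -> Lequiv m2 m1.
Proof. by move=> /LequivP/inLn'N L; apply/LequivP; apply: inLn'_ext L => p; rewrite opprB. Qed.

Lemma Lequiv_trans m2 m1 m3 : Lequiv m1 m2 -> Lequiv m2 m3 -> Lequiv m1 m3.
Proof.
move=> /LequivP L12 /LequivP L23; apply/LequivP.
by apply: inLn'_ext (inLn'D L12 L23) => p; rewrite addrA subrK.
Qed.

Lemma Lequiv_transl m1 m2 m : Lequiv m1 m2 -> Lequiv m1 m = Lequiv m2 m.
Proof.
move=> L12; apply/idP/idP; first exact/Lequiv_trans/(Lequiv_sym L12).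
exact: Lequiv_trans L12.
Qed.

Lemma Lequiv_addr m m1 m2 : Lequiv (m1 + m)%MM (m2 + m)%MM = Lequiv m1 m2.
Proof.
by apply/idP/idP => /LequivP L; apply/LequivP; apply: inLn'_ext L => p; rewrite !expoD; lia.
Qed.

Lemma Lequiv_swap m a b :
  Lequiv (m + Upair (sym_pair a b) + Upair (sym_pair a b))%MM
         (m + Upair (sym_pair a a) + Upair (sym_pair b b))%MM.
Proof.
apply/LequivP; apply: inLn'_ext (inLn'N (inLn'_brk a b)) => p.
by rewrite /brk /ebasis (sym_pairC b a) !expoD !expoU; lia.
Qed.

(* At an off-diagonal pair every generator [ab|ab] has an even coordinate. *)
Lemma Lequiv_odd m1 m2 p : Lequiv m1 m2 -> offdiag p -> odd (expo m1 p) = odd (expo m2 p).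
Proof.
move=> /LequivP [c hc] po.
apply: (@odd_subz_double _ _ (- \sum_i \sum_j c i j * ebasis i j p)).
rewrite hc mulrN mulr_sumr -sumrN; apply: eq_bigr => i _.
rewrite mulr_sumr -sumrN; apply: eq_bigr => j _.
by rewrite /brk /ebasis (sym_pairC j i) !sym_pair_diag_eq //=; lia.
Qed.

End Lattice.

Section NormalForm.
Variable n : nat.
Implicit Types (a b v : 'I_n) (p : Pair n) (m y : 'X_{1..nvar n}).

Lemma normal_inj m1 m2 : normal m1 -> normal m2 -> Vn m1 =1 Vn m2 -> Lequiv m1 m2 -> m1 = m2.
Proof.
move=> N1 N2 V12 L12.
have offdiag_eq p : offdiag p -> expo m1 p = expo m2 p.
  by move=> po; rewrite (normal_expo_odd N1 po) (normal_expo_odd N2 po) (Lequiv_odd L12 po).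
apply: expo_inj => p; have [/offdiag_eq //|/diag_pair ->] := boolP (offdiag p).
set v := (val p).1; have := V12 v; rewrite !Vn_row.
rewrite (eq_bigr (fun u => expo m2 (sym_pair v u))) => [/addIn|u uv]; first lia.
by apply: offdiag_eq; rewrite offdiag_sym_pair eq_sym.
Qed.

Lemma exists_normal_form m : exists y, [/\ normal y, Vn y =1 Vn m, Lequiv m y
  & forall k : fieldType, eqJ ('X_[m] : Rpoly k n) 'X_[y]].
Proof.
have [N] := ubnP (offdeg m); elim: N m => // N IH m.
have [mN _ | ] := boolP (normal m).
  by exists m; split=> // [|k]; [exact: Lequiv_refl | rewrite /eqJ subrr; exact: inJn0].
rewrite negb_forall_in => /exists_inP [p po]; rewrite -ltnNge => mp.
set a := (val p).1; set b := (val p).2.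
have {po} ab : a != b := po.
have {mp} : (1 < expo m (sym_pair a b))%N by rewrite sym_pair_val.
set x := Upair (sym_pair a b) => mx.
have -> : m = (m - x - x + x + x)%MM.
  have mx' : (0 < expo (m - x) (sym_pair a b))%N by rewrite expoB expoU eqxx; lia.
  by rewrite Upair_subK // Upair_subK // ltnW.
set m0 := (m - x - x)%MM; rewrite offdeg_swap // addn2 ltnS => /ltnW /IH.
move=> [y [yN yV Ly Jy]].
exists y; split=> // [v||k]; first by rewrite yV Vn_swap.
- exact: Lequiv_trans (Lequiv_swap m0 a b) Ly.
- exact: eqJ_trans (eqJ_swap k m0 a b) (Jy k).
Qed.

Definition nf m : 'X_{1..nvar n} :=
  proj1_sig (constructive_indefinite_description _ (exists_normal_form m)).

Lemma nf_spec m : [/\ normal (nf m), Vn (nf m) =1 Vn m, Lequiv m (nf m)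
  & forall k : fieldType, eqJ ('X_[m] : Rpoly k n) 'X_[nf m]].
Proof. exact: proj2_sig (constructive_indefinite_description _ (exists_normal_form m)). Qed.

Lemma nf_normal m : normal (nf m). Proof. by case: (nf_spec m). Qed.
Lemma nf_Vn m : Vn (nf m) =1 Vn m. Proof. by case: (nf_spec m). Qed.
Lemma Lequiv_nf m : Lequiv m (nf m). Proof. by case: (nf_spec m). Qed.
Lemma eqJ_nf (k : fieldType) m : eqJ ('X_[m] : Rpoly k n) 'X_[nf m].
Proof. by case: (nf_spec m). Qed.

Lemma nf_id y : normal y -> nf y = y.
Proof.
move=> yN; apply: normal_inj => //; [exact: nf_normal | exact: nf_Vn |].
exact/Lequiv_sym/Lequiv_nf.
Qed.

Lemma eq_nf m1 m2 : Vn m1 =1 Vn m2 -> Lequiv m1 m2 -> nf m1 = nf m2.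
Proof.
move=> V12 L12; apply: normal_inj; try exact: nf_normal.
  by move=> v; rewrite !nf_Vn V12.
apply: Lequiv_trans (Lequiv_nf m2); apply: Lequiv_trans L12.
exact/Lequiv_sym/Lequiv_nf.
Qed.

Lemma nf_eq_Lequiv m1 m2 : nf m1 = nf m2 -> Lequiv m1 m2.
Proof.
move=> e; apply: Lequiv_trans (Lequiv_nf m1) _; rewrite e.
exact/Lequiv_sym/Lequiv_nf.
Qed.

End NormalForm.

Section FiberClasses.
Variables (n : nat) (d : 'I_n -> nat).
Local Notation BT := (bmultinom (nvar n) (fbound d)).
Implicit Types (x z : BT) (C : {set BT}).

Lemma mem_fiber x : (x \in fiber d) = in_fiber d (bmnm x).
Proof. by rewrite inE. Qed.

Lemma fclassesP C : C \in fclasses d ->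
  exists2 x, x \in fiber d & C = [set z in fiber d | Lequiv (bmnm x) (bmnm z)].
Proof. by move=> /imsetP [x xD ->]; exists x. Qed.

Lemma fclasses_pick C : C \in fclasses d -> exists2 x, x \in C & [pick z in C] = Some x.
Proof.
move=> /fclassesP [x xD ->]; case: pickP => [z zC | none]; first by exists z.
by have := none x; rewrite inE xD Lequiv_refl.
Qed.

Definition class_nf C : 'X_{1..nvar n} :=
  if [pick z in C] is Some x then nf (bmnm x) else 0%MM.

Definition fiber_normals : seq 'X_{1..nvar n} := map class_nf (enum (fclasses d)).

Lemma eqJ_fiber_normals (k : fieldType) :
  eqJ (\sum_(C in fclasses d) class_mono k C) (\sum_(y <- fiber_normals) 'X_[y]).
Proof.
rewrite big_map big_enum /=; apply: eqJ_sum => C /fclasses_pick [x _].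
by rewrite /class_mono /class_nf => ->; apply: eqJ_nf.
Qed.

Lemma mem_fiber_normals : fiber_normals =i normal_fiber d.
Proof.
move=> y; apply/mapP/andP => [[C] | [yN /in_fiberP yd]].
  rewrite mem_enum => Cd ->; rewrite /class_nf; have [x xC ->] := fclasses_pick Cd.
  move: Cd xC => /fclassesP [z zD ->]; rewrite inE mem_fiber => /andP [/in_fiberP xd _].
  by split; [exact: nf_normal | apply/in_fiberP => v; rewrite nf_Vn xd].
have y_bounded : (mdeg y < fbound d)%N.
  by rewrite /fbound -(eq_bigr _ (fun v _ => yd v)) sum_Vn; lia.
pose x : BT := BMultinom y_bounded.
have xD : x \in fiber d by rewrite mem_fiber; apply/in_fiberP.
have Cd : [set z in fiber d | Lequiv (bmnm x) (bmnm z)] \in fclasses d by apply: imset_f.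
exists [set z in fiber d | Lequiv (bmnm x) (bmnm z)]; first by rewrite mem_enum.
have [z] := fclasses_pick Cd; rewrite inE mem_fiber => /andP [/in_fiberP zd Lxz].
rewrite /class_nf => ->; rewrite -[LHS](nf_id yN); apply: eq_nf => //= v.
by rewrite yd zd.
Qed.

Lemma uniq_fiber_normals : uniq fiber_normals.
Proof.
rewrite map_inj_in_uniq ?enum_uniq // => C1 C2; rewrite !mem_enum => C1d C2d.
rewrite /class_nf; have [x1 x1C ->] := fclasses_pick C1d.
have [x2 x2C ->] := fclasses_pick C2d; move=> /nf_eq_Lequiv L12.
move: C1d C2d x1C x2C => /fclassesP [z1 _ ->] /fclassesP [z2 _ ->].
rewrite !inE => /andP [_ L1] /andP [_ L2].
apply/setP => z; rewrite !inE; congr (_ && _); apply: Lequiv_transl.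
exact: Lequiv_trans L1 (Lequiv_trans L12 (Lequiv_sym L2)).
Qed.

End FiberClasses.

Section Shift.
Variables (n : nat) (i j : 'I_n).
Hypothesis ij : i != j.
Implicit Types (d : 'I_n -> nat) (S : seq 'X_{1..nvar n}) (y z : 'X_{1..nvar n}).
Local Notation xij := (Upair (sym_pair i j)).

Definition shift_nf S := map (fun y => nf (y + xij)%MM) S.

Lemma mul_xv_eqJ (k : fieldType) S :
  eqJ (xv k i j * \sum_(y <- S) 'X_[y]) (\sum_(z <- shift_nf S) 'X_[z]).
Proof.
rewrite big_map mulr_sumr; apply: eqJ_sum => y _.
by rewrite mulrC -(mpolyX_Upair k) -mpolyXD; apply: eqJ_nf.
Qed.

Lemma uniq_shift_nf d S : uniq S -> S =i normal_fiber d -> uniq (shift_nf S).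
Proof.
move=> Su Sd; rewrite map_inj_in_uniq // => y1 y2.
rewrite !Sd => /andP [N1 /in_fiberP V1] /andP [N2 /in_fiberP V2] /nf_eq_Lequiv.
by rewrite Lequiv_addr => L12; apply: normal_inj => // v; rewrite V1 V2.
Qed.

Lemma shift_nf_preimage d z : (n - 2 <= d i)%N -> (n - 2 <= d j)%N -> normal z ->
  (forall v, Vn z v = d v + (v == i) + (v == j))%N ->
  exists2 y, y \in normal_fiber d & nf (y + xij)%MM = z.
Proof.
move=> di dj zN zV.
have : (expo z (sym_pair i j) <= 1)%N by apply: (forall_inP zN); rewrite offdiag_sym_pair.
rewrite leq_eqVlt ltnS leqn0 => /orP [/eqP z_ij | /eqP z_ij].
  have [y zE] : exists y, z = (y + xij)%MM by exists (z - xij)%MM; rewrite Upair_subK ?z_ij.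
  rewrite {}zE in zN zV *; exists y; last exact: nf_id.
  apply/andP; split; first exact: normalDl zN.
  by apply/in_fiberP => v; have := zV v; rewrite VnD VnU; lia.
have z_ii : (0 < expo z (sym_pair i i))%N.
  by apply: (@normal_diag_pos n z i j zN ij z_ij); rewrite zV eqxx (negbTE ij); lia.
have z_jj : (0 < expo z (sym_pair j j))%N.
  apply: (@normal_diag_pos n z j i zN); rewrite 1?eq_sym 1?sym_pairC //.
  by rewrite zV eqxx eq_sym (negbTE ij); lia.
have [w zE] : exists w, z = (w + Upair (sym_pair i i) + Upair (sym_pair j j))%MM.
  exists (z - Upair (sym_pair j j) - Upair (sym_pair i i))%MM.
  have ji : j != i by rewrite eq_sym.
  by rewrite Upair_subK ?Upair_subK // expoB expoU sym_pair_eq (negbTE ji) /= subn0.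
rewrite {}zE in z_ij zN zV *.
exists (w + xij)%MM.
  apply/andP; split.
    apply/forall_inP => q qo; rewrite expoD expoU.
    have [<-|_] := eqVneq (sym_pair i j) q.
      by move: z_ij; rewrite !expoD !expoU !sym_pair_diag_eq ?offdiag_sym_pair // !addn0 => ->.
    by rewrite addn0; apply: (forall_inP (normalDl (normalDl zN))).
  by apply/in_fiberP => v; have := zV v; rewrite !VnD !VnU; lia.
rewrite -[RHS](nf_id zN); apply: eq_nf; [exact: Vn_swap | exact: Lequiv_swap].
Qed.

Lemma mem_shift_nf d d' S : S =i normal_fiber d ->
  (n - 2 <= d i)%N -> (n - 2 <= d j)%N -> (forall v, d' v = d v + (v == i) + (v == j))%N ->
  shift_nf S =i normal_fiber d'.
Proof.
move=> Sd di dj d'E z; apply/mapP/andP => [[y] | [zN /in_fiberP zV]].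
  rewrite Sd => /andP [_ /in_fiberP yd] ->; split; first exact: nf_normal.
  by apply/in_fiberP => v; rewrite nf_Vn VnD VnU yd d'E addnA.
have [y yd yz] := shift_nf_preimage di dj zN (fun v => etrans (zV v) (d'E v)).
by exists y; rewrite ?Sd.
Qed.

End Shift.

Theorem lemma2p18 (k : fieldType) (n : nat) (hn : (3 <= n)%N) (hodd : odd n)
    (i j l : 'I_n) (hij : i != j) (hjl : j != l) (hil : i != l) :
  inJn (xv k i j * pplus k l - xv k j l * pplus k i).
Proof.
pose d v := (bplus l v + (v == i) + (v == j))%N.
have fiber_l := mem_fiber_normals (bplus l).
have fiber_i := mem_fiber_normals (bplus i).
have shift_l : shift_nf i j (fiber_normals (bplus l)) =i normal_fiber d.
  by apply: mem_shift_nf; rewrite // /bplus leq_addr.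
have shift_i : shift_nf j l (fiber_normals (bplus i)) =i normal_fiber d.
  by apply: mem_shift_nf; rewrite // /bplus ?leq_addr // => v; rewrite /d /bplus; lia.
have perm_shift : perm_eq (shift_nf i j (fiber_normals (bplus l)))
                          (shift_nf j l (fiber_normals (bplus i))).
  apply: uniq_perm; [exact: (uniq_shift_nf i j (uniq_fiber_normals _) fiber_l) |
                     exact: (uniq_shift_nf j l (uniq_fiber_normals _) fiber_i) |].
  by move=> z; rewrite shift_l shift_i.
change (eqJ (xv k i j * pplus k l) (xv k j l * pplus k i)); rewrite /pplus.
apply: eqJ_trans (eqJ_mull _ (eqJ_fiber_normals (bplus l) k)) _.
apply: eqJ_trans (mul_xv_eqJ i j k _) _.
rewrite (perm_big _ perm_shift); apply: eqJ_sym.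
apply: eqJ_trans (eqJ_mull _ (eqJ_fiber_normals (bplus i) k)) _.
exact: mul_xv_eqJ.
Qed.
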